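(* Let $q=p^k$ with $p$ prime, and let $s\ge1$ be an integer. Then the Hamming space $Q_{q^2s}^n$ contains at least $q^{\binom{n}{2}(1+o(1))}$ mutually nonequivalent topolinear MDS codes, as $n\to\infty$.
   Context: $Q_Q$ denotes an alphabet of size $Q$ and $Q_Q^n$ the Hamming space of $n$-tuples. An MDS code (code distance 2) of length $n$ is a set $M\subseteq Q_Q^n$ with $|M|=Q^{n-1}$ and any two distinct elements at Hamming distance at least $2$. Two sets are equivalent if one is mapped to the other by an isometry of the Hamming space (a composition of a coordinate permutation and an isotopism $\overline{x}\mapsto(\tau_1x_1,\dots,\tau_nx_n)$, $\tau_i$ permutations of the alphabet). $M$ is topolinear if the group of isotopisms mapping $M$ onto $M$ contains a subgroup of cardinality $|M|$ acting transitively on $M$. *)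

From HB Require Import structures.
From mathcomp Require Import all_boot all_order all_fingroup.
Set Implicit Arguments. Unset Strict Implicit. Unset Printing Implicit Defensive.

Notation word n Q := {ffun 'I_n -> 'I_Q} (only parsing).

Definition hdist (n Q : nat) (x y : word n Q) : nat := #|[set i | x i != y i]|.

Definition is_MDS (n Q : nat) (M : {set word n Q}) : Prop :=
  #|M| = Q ^ (n - 1) /\
  (forall x y, x \in M -> y \in M -> x != y -> 2 <= hdist x y).

Definition isotopism_map (n Q : nat) (tau : 'I_n -> {perm 'I_Q})
  (x : word n Q) : word n Q := [ffun i => tau i (x i)].

Definition isometry_map (n Q : nat) (sigma : {perm 'I_n})
  (tau : 'I_n -> {perm 'I_Q}) (x : word n Q) : word n Q :=
  [ffun i => tau i (x (sigma i))].

Definition equivalent (n Q : nat) (M1 M2 : {set word n Q}) : Prop :=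
  exists (sigma : {perm 'I_n}) (tau : 'I_n -> {perm 'I_Q}),
    isometry_map sigma tau @: M1 = M2.

Definition is_isotopism (n Q : nat) (g : {perm word n Q}) : Prop :=
  exists tau : 'I_n -> {perm 'I_Q}, forall x, g x = isotopism_map tau x.

Definition topolinear (n Q : nat) (M : {set word n Q}) : Prop :=
  exists H : {group {perm word n Q}},
    [/\ (forall g, g \in H -> is_isotopism g /\ g @: M = M),
        #|H| = #|M| &
        (forall x y, x \in M -> y \in M -> exists2 h, h \in H & h x = y)].

From HB Require Import structures.
From mathcomp Require Import all_boot all_order all_fingroup.
From mathcomp Require Import all_algebra.
From mathcomp Require Import zify ring.
Set Implicit Arguments. Unset Strict Implicit. Unset Printing Implicit Defensive.
Import GRing.Theory.

(* Identify the alphabet with the letters (a, b, z) of R * R * Z, where R is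
   the ring Z/qZ and Z the cyclic group of order s.  For a square matrix E
   over R with quadratic form Phi_E(a) = sum_ij E_ij a_i a_j, the code
       M_E = { x | sum_i a_i = 0, sum_i b_i = Phi_E(a), sum_i z_i = 0 }
   is MDS: any n - 1 letters of a codeword determine the last one, and every
   choice of n - 1 letters extends.  It is topolinear: for each u in M_E the
   coordinatewise maps (a, b, z) |-> (a + a_u, b + b_u + a * polar_i(a_u), z + z_u),
   polar being the polar form of Phi_E, form an isotopism preserving M_E, and
   these isotopisms make up a group isomorphic to M_E acting regularly on it.
   Strictly upper triangular matrices give pairwise distinct codes, because
   Phi_E(e_i - e_j) = - E_ij; this yields q^C(n,2) codes.  A maximal pairwise
   nonequivalent subfamily F loses at most the number |W| <= (n (q^2 s)!)^n of
   isometries, and |W|^m <= 2^C(n,2) for large n, whence |F|^m >= q^(C(n,2)(m-1)). *)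

Section Isometries.
Variables n Q : nat.
Local Notation word := {ffun 'I_n -> 'I_Q}.

Local Notation isometry := ({perm 'I_n} * {ffun 'I_n -> {perm 'I_Q}})%type.

Definition isom (w : isometry) : word -> word := isometry_map w.1 w.2.

Definition isom_inv (w : isometry) : isometry :=
  (w.1^-1, [ffun i => (w.2 (w.1^-1 i))^-1])%g.

Lemma isom_invK w : cancel (isom w) (isom (isom_inv w)).
Proof. by move=> x; apply/ffunP => i; rewrite !ffunE permKV permK. Qed.

(* Boolean version of [equivalent], needed to speak of maximal sets of codes. *)
Definition equivb (M1 M2 : {set word}) : bool :=
  [exists w : isometry, isom w @: M1 == M2].

Lemma equivP M1 M2 : reflect (equivalent M1 M2) (equivb M1 M2).
Proof.
apply: (iffP existsP) => [[w /eqP <-]|[sigma [tau <-]]]; first by exists w.1, w.2.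
exists (sigma, [ffun i => tau i]); apply/eqP/eq_imset => x.
by apply/ffunP => i; rewrite !ffunE.
Qed.

Lemma equivb_refl (M : {set word}) : equivb M M.
Proof.
apply/existsP; exists (1, [ffun=> 1])%g; apply/eqP.
rewrite -[RHS]imset_id; apply: eq_imset => x.
by apply/ffunP => i; rewrite !ffunE !perm1.
Qed.

Lemma equivalent_sym (M1 M2 : {set word}) : equivalent M1 M2 -> equivalent M2 M1.
Proof.
move/equivP/existsP=> [w /eqP <-]; apply/equivP/existsP; exists (isom_inv w).
rewrite -imset_comp -[X in _ == X]imset_id; apply/eqP/eq_imset => x.
exact: isom_invK.
Qed.

(* Every family C of codes contains a pairwise nonequivalent subfamily F which
   loses at most a factor #|isometry|: take F maximal; by maximality every code
   of C is the image of a member of F under some isometry. *)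
Lemma nonequivalent_subfamily (C : {set {set word}}) :
  exists F : {set {set word}},
    [/\ F \subset C,
        (forall M1 M2, M1 \in F -> M2 \in F -> M1 != M2 -> ~ equivalent M1 M2) &
        #|C| <= #|F| * #|{: isometry}|].
Proof.
pose P (F : {set {set word}}) := (F \subset C) &&
  [forall M1 in F, forall M2 in F, (M1 != M2) ==> ~~ equivb M1 M2].
have P0 : P set0 by rewrite /P sub0set; apply/forall_inP => M; rewrite inE.
have [F /maxsetP[/andP[FC /forall_inP FP] maxF] _] := maxset_exists P0.
have hF M1 M2 : M1 \in F -> M2 \in F -> M1 != M2 -> ~~ equivb M1 M2.
  by move=> /FP/forall_inP/[apply]/implyP.
have cover M : M \in C -> exists2 M', M' \in F & equivb M' M.
  move=> MC; case: (boolP [exists M' in F, equivb M' M]) => [/exists_inP//|noM].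
  have PMF : P (M |: F).
    rewrite /P subUset sub1set MC FC /=.
    apply/forall_inP => M1 /setU1P[->|M1F]; apply/forall_inP => M2 /setU1P[->|M2F];
      apply/implyP => ne.
    - by rewrite eqxx in ne.
    - apply: contra noM => /equivP/equivalent_sym/equivP eM.
      by apply/exists_inP; exists M2.
    - by apply: contra noM => eM; apply/exists_inP; exists M1.
    - exact: hF.
  exists M; last exact: equivb_refl.
  by rewrite -(maxF _ PMF (subsetUr _ _)) setU11.
have CU : C \subset (fun p : {set word} * isometry => isom p.2 @: p.1) @: setX F setT.
  apply/subsetP => M /cover[M' M'F /existsP[w /eqP <-]].
  by apply/imsetP; exists (M', w); rewrite ?in_setX ?M'F ?in_setT.
exists F; split=> // [M1 M2 h1 h2 ne /equivP|]; first exact/negP/hF.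
apply: leq_trans (subset_leq_card CU) _; apply: leq_trans (leq_imset_card _ _) _.
by rewrite cardsX cardsT.
Qed.

Lemma card_isometry : #|{: isometry}| <= (n * Q`!) ^ n.
Proof.
have fact_le : n`! <= n ^ n.
  by have := leq_card (@pval 'I_n) val_inj; rewrite card_Sn card_ffun card_ord.
by rewrite card_prod card_ffun !card_Sn card_ord expnMn leq_mul.
Qed.

End Isometries.

Section QuadraticCodes.
Variables (R : finComNzRingType) (Z : finZmodType) (Q n : nat).
(* The alphabet 'I_Q is identified with the letters (a, b, z) of R * R * Z. *)
Local Notation letter := (R * R * Z)%type.
Local Notation word := {ffun 'I_n -> 'I_Q}.
Variables (e : letter -> 'I_Q) (d : 'I_Q -> letter).
Hypotheses (edK : cancel e d) (deK : cancel d e).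
Local Open Scope ring_scope.

(* If two families agree outside the index l and have equal sums, they also
   agree at l: a code defined by sum conditions detects single errors. *)
Lemma sum_determines_entry (V : zmodType) (f g : 'I_n -> V) (l : 'I_n) :
  (forall i, i != l -> f i = g i) -> \sum_i f i = \sum_i g i -> f l = g l.
Proof.
move=> fg; rewrite (bigD1 l) //= [in RHS](bigD1 l) //=.
by rewrite (eq_bigr g) => [/addIr|i /fg].
Qed.

Definition av (x : word) i := (d (x i)).1.1.
Definition bv (x : word) i := (d (x i)).1.2.
Definition zv (x : word) i := (d (x i)).2.

Definition mkword (f : 'I_n -> letter) : word := [ffun i => e (f i)].

Lemma d_mkword f i : d (mkword f i) = f i.
Proof. by rewrite ffunE edK. Qed.

Lemma word_eq (x y : word) : (forall i, d (x i) = d (y i)) -> x = y.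
Proof. by move=> xy; apply/ffunP => i; apply: (can_inj deK). Qed.

Section FixedForm.
Variable E : 'I_n -> 'I_n -> R.

Definition Phi (a : 'I_n -> R) : R := \sum_i \sum_j E i j * (a i * a j).

Lemma Phi_ext a a' : a =1 a' -> Phi a = Phi a'.
Proof. by move=> aa'; apply: eq_bigr => i _; apply: eq_bigr => j _; rewrite !aa'. Qed.

Definition code : {set word} :=
  [set x | [&& \sum_i av x i == 0, \sum_i bv x i == Phi (av x) & \sum_i zv x i == 0]].

Lemma mkword_code (f : 'I_n -> letter) :
  \sum_i (f i).1.1 = 0 -> \sum_i (f i).1.2 = Phi (fun i => (f i).1.1) ->
  \sum_i (f i).2 = 0 -> mkword f \in code.
Proof.
have ha : av (mkword f) =1 (fun i => (f i).1.1) by move=> i; rewrite /av d_mkword.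
move=> fa fb fz; rewrite inE (Phi_ext ha); apply/and3P; split; apply/eqP.
- by rewrite -[RHS]fa; apply: eq_bigr => i _.
- by rewrite -[RHS]fb; apply: eq_bigr => i _; rewrite /bv d_mkword.
- by rewrite -[RHS]fz; apply: eq_bigr => i _; rewrite /zv d_mkword.
Qed.

(* Two codewords that agree outside one coordinate l coincide: the three sum
   conditions determine the letter at l from the other letters. *)
Lemma code_agree x y l : x \in code -> y \in code ->
  (forall i, i != l -> x i = y i) -> x = y.
Proof.
rewrite !inE => /and3P[/eqP ax /eqP bx /eqP zx] /and3P[/eqP ay /eqP by_ /eqP zy] xy.
have ha : av x =1 av y.
  move=> i; have [->|il] := eqVneq i l; last by rewrite /av xy.
  by apply: (sum_determines_entry (l := l)) => [k kl|]; [rewrite /av xy | rewrite ax ay].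
have hb : bv x l = bv y l.
  apply: (sum_determines_entry (l := l)) => [k kl|]; first by rewrite /bv xy.
  by rewrite bx by_; apply: Phi_ext.
have hz : zv x l = zv y l.
  by apply: (sum_determines_entry (l := l)) => [k kl|]; [rewrite /zv xy | rewrite zx zy].
apply: word_eq => i; have [->|il] := eqVneq i l; last by rewrite xy.
move: (ha l) hb hz; rewrite /av /bv /zv.
by case: (d (x l)) => [[? ?] ?]; case: (d (y l)) => [[? ?] ?] /= -> -> ->.
Qed.

Lemma code_dist x y : x \in code -> y \in code -> x != y -> (2 <= hdist x y)%N.
Proof.
move=> xM yM; apply: contraR; rewrite -ltnNge ltnS /hdist => le1.
have [l ls|S0] := pickP (mem [set i | x i != y i]); last first.
  by apply/eqP/ffunP => i; have := S0 i; rewrite !inE => /negbFE/eqP.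
apply/eqP; apply: (code_agree (l := l)) => // i il; apply/eqP.
by apply: contraNT il => ni; apply/eqP/(card_le1_eqP le1); rewrite // inE.
Qed.

Section Puncture.
Variable l : 'I_n.

(* Deleting the coordinate l; it maps the code bijectively onto all words of
   length n - 1, the inverse being [complete] below. *)
Definition puncture (x : word) : {ffun 'I_n.-1 -> 'I_Q} := [ffun j => x (lift l j)].

Definition complete_a (w : {ffun 'I_n.-1 -> 'I_Q}) (i : 'I_n) : R :=
  if unlift l i is Some j then (d (w j)).1.1 else - \sum_j (d (w j)).1.1.

Definition complete_letter (w : {ffun 'I_n.-1 -> 'I_Q}) (i : 'I_n) : letter :=
  if unlift l i is Some j then d (w j) else
    (complete_a w l, Phi (complete_a w) - \sum_j (d (w j)).1.2, - \sum_j (d (w j)).2).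

Definition complete (w : {ffun 'I_n.-1 -> 'I_Q}) : word := mkword (complete_letter w).

Lemma sum_lift (V : zmodType) (F : 'I_n -> V) :
  \sum_i F i = F l + \sum_(j < n.-1) F (lift l j).
Proof. by rewrite (bigD1_ord l (P := xpredT)). Qed.

Lemma complete_code w : complete w \in code.
Proof.
have at_l : complete_letter w l =
    (complete_a w l, Phi (complete_a w) - \sum_j (d (w j)).1.2, - \sum_j (d (w j)).2).
  by rewrite /complete_letter unlift_none.
have at_lift j : complete_letter w (lift l j) = d (w j).
  by rewrite /complete_letter liftK.
have ha i : (complete_letter w i).1.1 = complete_a w i.
  by case: (unliftP l i) => [j ->|->]; rewrite ?at_l // at_lift /complete_a liftK.
have sum_at_lift (V : zmodType) (c : letter -> V) :
    \sum_j c (complete_letter w (lift l j)) = \sum_j c (d (w j)).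
  by apply: eq_bigr => j _; rewrite at_lift.
apply: mkword_code; rewrite sum_lift at_l /=.
- by rewrite (sum_at_lift _ (fun t => t.1.1)) /complete_a unlift_none addNr.
- by rewrite (sum_at_lift _ (fun t => t.1.2)) subrK; apply: Phi_ext.
- by rewrite (sum_at_lift _ (fun t => t.2)) addNr.
Qed.

(* The code has Q^(n-1) words: puncturing is injective on it (code_agree)
   and onto (complete_code). *)
Lemma card_code : #|code| = (Q ^ n.-1)%N.
Proof.
have inj : {in code &, injective puncture}.
  move=> x y xM yM /ffunP xy; apply: (code_agree (l := l)) => // i.
  by case: (unliftP l i) => [j ->|->]; [have := xy j; rewrite !ffunE | rewrite eqxx].
have onto : puncture @: code = setT.
  apply/setP => w; rewrite inE; apply/imsetP.
  exists (complete w); first exact: complete_code.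
  by apply/ffunP => j; rewrite !ffunE /complete_letter liftK deK.
by rewrite -(card_in_imset inj) onto cardsT card_ffun !card_ord.
Qed.

End Puncture.

Lemma code_MDS : (0 < n)%N -> is_MDS code.
Proof.
by move=> n0; split; [rewrite (card_code (Ordinal n0)) subn1 | exact: code_dist].
Qed.

Definition polar (al : 'I_n -> R) (i : 'I_n) : R := \sum_j (E i j + E j i) * al j.

Lemma polarD al be i : polar (fun j => al j + be j) i = polar al i + polar be i.
Proof. by rewrite /polar -big_split; apply: eq_bigr => j _; rewrite mulrDr. Qed.

Lemma PhiD a al :
  Phi (fun i => a i + al i) = Phi a + Phi al + \sum_i a i * polar al i.
Proof.
have cross : \sum_i a i * polar al i =
    \sum_i \sum_j E i j * (a i * al j) + \sum_i \sum_j E i j * (al i * a j).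
  rewrite [X in _ = _ + X]exchange_big -big_split; apply: eq_bigr => i _.
  by rewrite /polar mulr_sumr -big_split; apply: eq_bigr => j _ /=; ring.
rewrite cross /Phi -!big_split; apply: eq_bigr => i _; rewrite -!big_split.
by apply: eq_bigr => j _ /=; ring.
Qed.

Definition shift (u : word) (i : 'I_n) (t : letter) : letter :=
  ((t.1.1 + av u i, t.1.2 + bv u i + t.1.1 * polar (av u) i), t.2 + zv u i).

Lemma shift_inj u i : injective (shift u i).
Proof.
move=> [[a b] z] [[a' b'] z'] [] /addIr ha; rewrite ha => /addIr/addIr hb /addIr hz.
by rewrite hb hz.
Qed.

Definition shift_perm u i : {perm 'I_Q} :=
  perm (fun c c' (h : e (shift u i (d c)) = e (shift u i (d c'))) =>
          can_inj deK (shift_inj (can_inj edK h))).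

Definition transl (u : word) : word -> word := isotopism_map (shift_perm u).

Lemma d_transl u x i : d (transl u x i) = shift u i (d (x i)).
Proof. by rewrite ffunE permE edK. Qed.

Lemma transl_inj u : injective (transl u).
Proof.
by move=> x y /ffunP xy; apply/ffunP => i; have := xy i; rewrite !ffunE => /perm_inj.
Qed.

Definition zero_word : word := mkword (fun=> (0, 0, 0)).

Lemma zero_code : zero_word \in code.
Proof.
apply: mkword_code; rewrite ?big1 // /Phi big1 // => i _.
by rewrite big1 // => j _; rewrite mul0r mulr0.
Qed.

(* Thanks to the polarization identity, the code is closed under translation. *)
Lemma transl_code u x : u \in code -> x \in code -> transl u x \in code.
Proof.
rewrite !inE => /and3P[/eqP au /eqP bu /eqP zu] /and3P[/eqP ax /eqP bx /eqP zx].
have ha : av (transl u x) =1 fun i => av x i + av u i by move=> i; rewrite /av d_transl.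
apply/and3P; split; apply/eqP.
- by rewrite (eq_bigr _ (fun i _ => ha i)) big_split /= ax au addr0.
- rewrite (Phi_ext ha) PhiD -bx -bu -!big_split.
  by apply: eq_bigr => i _; rewrite /bv /av d_transl.
- rewrite (eq_bigr (fun i => zv x i + zv u i)) => [|i _]; last by rewrite /zv d_transl.
  by rewrite big_split /= zx zu addr0.
Qed.

Lemma transl_zero u : transl u zero_word = u.
Proof.
apply: word_eq => i; rewrite d_transl d_mkword /shift /= !add0r mul0r addr0.
by rewrite /av /bv /zv; case: (d (u i)) => [[? ?] ?].
Qed.

Lemma zero_transl x : transl zero_word x = x.
Proof.
have d0 i : d (zero_word i) = (0, 0, 0) by rewrite d_mkword.
have L0 i : polar (av zero_word) i = 0 by apply: big1 => j _; rewrite /av d0 mulr0.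
apply: word_eq => i; rewrite d_transl /shift L0 /av /bv /zv d0 /= !addr0 mulr0 addr0.
by case: (d (x i)) => [[? ?] ?].
Qed.

Lemma transl_comp u v x : transl u (transl v x) = transl (transl u v) x.
Proof.
apply: word_eq => i; rewrite !d_transl.
have ha j : av (transl u v) j = av v j + av u j by rewrite /av d_transl.
have hb : bv (transl u v) i = bv v i + bv u i + av v i * polar (av u) i.
  by rewrite /bv /av d_transl.
have hz : zv (transl u v) i = zv v i + zv u i by rewrite /zv d_transl.
have hL : polar (av (transl u v)) i = polar (av v) i + polar (av u) i.
  by rewrite -polarD; apply: eq_bigr => j _; rewrite ha.
rewrite /shift ha hb hz hL /=; congr ((_, _), _); [ring | ring | by rewrite addrA].
Qed.

Definition transl_perm u : {perm word} := perm (@transl_inj u).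

Lemma transl_permM u v : (transl_perm u * transl_perm v)%g = transl_perm (transl v u).
Proof. by apply/permP => x; rewrite permM !permE transl_comp. Qed.

Lemma transl_group : group_set (transl_perm @: code).
Proof.
apply/andP; split.
  apply/imsetP; exists zero_word; first exact: zero_code.
  by apply/permP => x; rewrite !permE zero_transl.
apply/subsetP => _ /mulsgP[_ _ /imsetP[u uM ->] /imsetP[v vM ->] ->].
by rewrite transl_permM; apply/imsetP; exists (transl v u); rewrite ?transl_code.
Qed.

Lemma code_topolinear : topolinear code.
Proof.
have inH w : w \in code -> transl_perm w \in Group transl_group.
  by move=> wM; apply/imsetP; exists w.
exists (Group transl_group); split.
- move=> _ /imsetP[u uM ->]; split; first by exists (shift_perm u) => x; rewrite permE.
  apply/eqP; rewrite eqEcard card_imset ?leqnn ?andbT; last exact: perm_inj.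
  by apply/subsetP => _ /imsetP[x xM ->]; rewrite permE transl_code.
- apply: card_in_imset => u v uM vM /(congr1 (fun g : {perm word} => g zero_word)).
  by rewrite /= !permE !transl_zero.
- move=> x y xM yM; exists ((transl_perm x)^-1 * transl_perm y)%g.
    by rewrite groupM ?groupV ?inH.
  have x0 : (transl_perm x)^-1%g x = zero_word.
    by apply: (@perm_inj _ (transl_perm x)); rewrite permKV permE transl_zero.
  by rewrite permM x0 permE transl_zero.
Qed.

End FixedForm.

(* Equal codes have equal quadratic forms on the hyperplane sum a = 0: the
   word with letters (a_k, [k = i0] Phi_E(a), 0) lies in M_E. *)
Lemma code_Phi (E E' : 'I_n -> 'I_n -> R) (i0 : 'I_n) (a : 'I_n -> R) :
  \sum_i a i = 0 -> code E = code E' -> Phi E a = Phi E' a.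
Proof.
move=> a0 EE'; pose f k : letter := (a k, if k == i0 then Phi E a else 0, 0).
have fb : \sum_k (f k).1.2 = Phi E a by rewrite -big_mkcond big_pred1_eq.
have : mkword f \in code E by apply: mkword_code; [exact: a0 | rewrite fb | rewrite big1].
rewrite EE' inE => /and3P[_ /eqP fb' _]; rewrite -fb.
rewrite (eq_bigr (bv (mkword f))) => [|k _]; last by rewrite /bv d_mkword.
by rewrite fb'; apply: Phi_ext => k; rewrite /av d_mkword.
Qed.

Definition unit_diff (i j : 'I_n) (k : 'I_n) : R :=
  (if k == i then 1 else 0) - (if k == j then 1 else 0).

Lemma dot_unit_diff (c : 'I_n -> R) i j : \sum_k c k * unit_diff i j k = c i - c j.
Proof.
rewrite /unit_diff
  (eq_bigr (fun k => (if k == i then c k else 0) - (if k == j then c k else 0))).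
  by rewrite sumrB -!big_mkcond !big_pred1_eq.
by move=> k _; rewrite mulrBr; case: (k == i); case: (k == j); rewrite ?mulr1 ?mulr0.
Qed.

Lemma sum_unit_diff i j : \sum_k unit_diff i j k = 0.
Proof.
rewrite -[RHS](subrr (1 : R)) -(dot_unit_diff (fun=> 1) i j).
by apply: eq_bigr => k _; rewrite mul1r.
Qed.

Lemma Phi_unit_diff (E : 'I_n -> 'I_n -> R) (i j : 'I_n) :
  (forall k l : 'I_n, (l <= k)%N -> E k l = 0) -> (i < j)%N ->
  Phi E (unit_diff i j) = - E i j.
Proof.
move=> upper ij.
have -> : Phi E (unit_diff i j) = \sum_k (E k i - E k j) * unit_diff i j k.
  apply: eq_bigr => k _; rewrite -dot_unit_diff mulr_suml.
  by apply: eq_bigr => l _; rewrite mulrA mulrAC.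
rewrite dot_unit_diff (upper i i) ?(upper j i) ?(upper j j) ?(ltnW ij) //; ring.
Qed.

Definition pair_matrix (g : {ffun {set 'I_n} -> R}) (i j : 'I_n) : R :=
  if (i < j)%N then g [set i; j] else 0.

Definition pair_functions : {set {ffun {set 'I_n} -> R}} :=
  [set g | g \in pffun_on 0 [set A : {set 'I_n} | #|A| == 2%N] predT].

Lemma card_pair_functions : #|pair_functions| = (#|R| ^ 'C(n, 2))%N.
Proof. by rewrite cardsE card_pffun_on card_draws card_ord. Qed.

Lemma pair_functions_zero g (A : {set 'I_n}) :
  g \in pair_functions -> #|A| != 2%N -> g A = 0.
Proof.
rewrite inE => /pffun_onP[supp _] nA; apply/eqP; apply: contraNT nA => gA.
by have := subsetP supp A; rewrite !inE => /(_ gA).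
Qed.

Lemma pair_matrix_code_inj :
  {in pair_functions &, injective (fun g => code (pair_matrix g))}.
Proof.
move=> g h gG hG gh; apply/ffunP => A.
have [/cards2P [x [y [xy ->]]] | nA] := boolP (#|A| == 2%N); last first.
  by rewrite !pair_functions_zero.
wlog lt_xy : x y xy / (x < y)%N.
  move=> W; case: (ltngtP x y) => [|lt_yx|/val_inj xy']; first exact: W.
    by rewrite setUC; apply: W; rewrite // eq_sym.
  by rewrite xy' eqxx in xy.
have upper f (k l : 'I_n) : (l <= k)%N -> pair_matrix f k l = 0.
  by rewrite /pair_matrix ltnNge => ->.
have := code_Phi x (sum_unit_diff x y) gh.
rewrite (Phi_unit_diff (upper g)) ?(Phi_unit_diff (upper h)) //.
by rewrite /pair_matrix lt_xy => /oppr_inj.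
Qed.

Lemma quadratic_code_family : (0 < n)%N ->
  exists C : {set {set word}},
    #|C| = (#|R| ^ 'C(n, 2))%N /\ (forall M, M \in C -> is_MDS M /\ topolinear M).
Proof.
move=> n0; exists [set code (pair_matrix g) | g in pair_functions]; split.
  by rewrite card_in_imset ?card_pair_functions //; exact: pair_matrix_code_inj.
by move=> _ /imsetP[g _ ->]; split; [exact: code_MDS | exact: code_topolinear].
Qed.

End QuadraticCodes.

(* Any alphabet of size Q = #|R|^2 #|Z| can be identified with R * R * Z, so
   'I_Q^n contains #|R|^C(n,2) distinct topolinear MDS codes. *)
Lemma topolinear_MDS_codes (R : finComNzRingType) (Z : finZmodType) (Q n : nat) :
  #|R| ^ 2 * #|Z| = Q -> 0 < n ->
  exists C : {set {set {ffun 'I_n -> 'I_Q}}},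
    #|C| = #|R| ^ 'C(n, 2) /\ (forall M, M \in C -> is_MDS M /\ topolinear M).
Proof.
move=> cardQ; have cT : #|{: R * R * Z}| = Q by rewrite !card_prod mulnn.
apply: (quadratic_code_family (e := fun t => cast_ord cT (enum_rank t))
          (d := fun i => enum_val (cast_ord (esym cT) i))) => [t | i].
- by rewrite cast_ordK enum_rankK.
- by rewrite enum_valK cast_ordKV.
Qed.

Lemma leq_exp_base a b k : a <= b -> a ^ k <= b ^ k.
Proof. by move=> ab; elim: k => // k IH; rewrite !expnS leq_mul. Qed.

Lemma bin2_double n : 'C(n, 2) * 2 = n * n.-1.
Proof. by rewrite -[2]/(2`!) bin_ffact ffactnS ffactn1. Qed.

Lemma sq_le_exp2 t : 4 <= t -> t * t <= 2 ^ t.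
Proof.
elim: t => // t IH; rewrite leq_eqVlt => /orP[/eqP <-//|]; rewrite ltnS => t4.
by have := IH t4; rewrite expnS; nia.
Qed.

(* Exponentials dominate polynomials: b n^a <= 2^n for all large n.  With
   2^t <= n < 2^(t+1) one has b n^a <= 2^(b + (t+1) a) <= 2^(t^2) <= 2^n. *)
Lemma exp2_dominates_poly a b : exists N, forall n, N <= n -> b * n ^ a <= 2 ^ n.
Proof.
exists (2 ^ (a + b + 4)) => n Nn.
have n0 : 0 < n by apply: leq_trans Nn; rewrite expn_gt0.
set t := trunc_log 2 n.
have tn : 2 ^ t <= n by apply: trunc_logP.
have nt : n < 2 ^ t.+1 by apply: trunc_log_ltn.
have abt : a + b + 4 <= t.
  by rewrite -ltnS -(ltn_exp2l _ _ (ltnSn 1)); apply: leq_ltn_trans Nn nt.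
have bound : b * n ^ a <= 2 ^ b * 2 ^ (t.+1 * a).
  by rewrite expnM leq_mul ?leq_exp_base ?(ltnW nt) // ltnW // ltn_expl.
apply: (leq_trans bound); rewrite -expnD leq_exp2l //.
by have := sq_le_exp2 (_ : 4 <= t); nia.
Qed.

Lemma isometries_negligible K m :
  exists N, forall n, N <= n -> (n * K) ^ (n * m) <= 2 ^ 'C(n, 2).
Proof.
have [N HN] := exp2_dominates_poly (2 * m) (2 * K ^ (2 * m)).
exists N.+1 => n Nn; have n0 : 0 < n by apply: leq_trans Nn.
have base : (n * K) ^ (2 * m) <= 2 ^ n.-1.
  rewrite -(leq_pmul2l (ltn0Sn 1)) -expnS prednK // expnMn mulnCA mulnC.
  exact: HN (ltnW Nn).
rewrite -leq_sqr -!expnM bin2_double -mulnA (mulnC m) (mulnC n (2 * m)) (mulnC n n.-1).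
by rewrite expnM [2 ^ _]expnM; apply: leq_exp_base.
Qed.

Lemma power_lower_bound q c f w C m :
  0 < q -> q ^ C <= c -> c <= f * w -> w ^ m <= q ^ C -> q ^ (C * (m - 1)) <= f ^ m.
Proof.
move=> q0 qc cfw; case: m => [|m] wm; first by rewrite muln0.
have qC0 : 0 < q ^ C by rewrite expn_gt0 q0.
rewrite -(leq_pmul2r qC0) -expnD subn1 /= -mulnSr expnM.
apply: leq_trans (leq_exp_base m.+1 (leq_trans qc cfw)) _.
by rewrite expnMn leq_mul.
Qed.

Theorem corollary3 (p k s : nat) (hp : prime p) (hk : 0 < k) (hs : 0 < s) :
  let q := p ^ k in
  forall m : nat, 0 < m ->
  exists N : nat, forall n : nat, N <= n ->
    exists F : {set {set {ffun 'I_n -> 'I_(q ^ 2 * s)}}},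
      [/\ (forall M, M \in F -> is_MDS M /\ topolinear M),
          (forall M1 M2, M1 \in F -> M2 \in F -> M1 != M2 -> ~ equivalent M1 M2) &
          q ^ ('C(n, 2) * (m - 1)) <= #|F| ^ m].
Proof.
move=> q m _.
have q1 : 1 < q by rewrite /q -(expn0 p) ltn_exp2l ?prime_gt1.
case: s hs => // s' _; set Q := q ^ 2 * s'.+1.
have [N HN] := isometries_negligible Q`! m.
exists N.+1 => n Nn.
have cardQ : #|'Z_q| ^ 2 * #|'I_s'.+1| = Q by rewrite !card_ord Zp_cast.
have [C [cardC codesC]] := topolinear_MDS_codes cardQ (leq_ltn_trans (leq0n N) Nn).
have [F [FC Fnoneq cardF]] := nonequivalent_subfamily C.
exists F; split=> // [M /(subsetP FC)/codesC //|].
apply: (power_lower_bound (ltnW q1) _ cardF); first by rewrite cardC card_ord Zp_cast.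
apply: leq_trans (leq_exp_base m (card_isometry n Q)) _; rewrite -expnM.
by apply: leq_trans (HN n (ltnW Nn)) _; apply: leq_exp_base.
Qed.
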